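(* Let $\Gamma$ be a countable group acting affinely on $\mathbb{R}^n$, let $\mathsf W\subseteq\mathbb{R}^n$ be a (not necessarily connected) open subset, and let $h:\mathsf W\to\mathbb{R}^n$ be a $C^1$ map preserving $\Gamma$-orbits (i.e. $h(x)\in\Gamma\cdot x$ for all $x$). Then for each $x\in\mathsf W$ there is $\gamma\in\Gamma$ such that $h$ and the map $y\mapsto\gamma\cdot y$ have the same germ at $x$.
   Context: Two maps have the same germ at $x$ if they agree on some neighbourhood of $x$. *)

From HB Require Import structures.
From mathcomp Require Import all_boot all_order all_algebra.
From mathcomp Require Import all_classical all_reals all_analysis.
Set Implicit Arguments. Unset Strict Implicit. Unset Printing Implicit Defensive.
Import Order.TTheory GRing.Theory Num.Theory.
Import numFieldNormedType.Exports.
Local Open Scope classical_set_scope.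
Local Open Scope ring_scope.

Definition is_group (G : Type) (mul : G -> G -> G) (one : G) (inv : G -> G) :=
  [/\ forall a b c, mul a (mul b c) = mul (mul a b) c,
      forall a, mul one a = a,
      forall a, mul a one = a,
      forall a, mul (inv a) a = one &
      forall a, mul a (inv a) = one].

Definition is_affine_map (R : realType) (n : nat)
  (f : 'rV[R]_n -> 'rV[R]_n) :=
  exists (A : 'M[R]_n) (b : 'rV[R]_n), forall x, f x = x *m A + b.

Definition affine_action (R : realType) (n : nat) (G : Type)
  (mul : G -> G -> G) (one : G) (act : G -> 'rV[R]_n -> 'rV[R]_n) :=
  [/\ forall x, act one x = x,
      forall g k x, act (mul g k) x = act g (act k x) &
      forall g, is_affine_map (act g)].

Definition C1_on (R : realType) (n : nat) (W : set 'rV[R]_n)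
  (h : 'rV[R]_n -> 'rV[R]_n) :=
  (forall x, W x -> differentiable h x) /\
  (forall v x, W x -> {for x, continuous (fun y => 'd h y v)}).

Definition same_germ (R : realType) (n : nat) (U : Type)
  (f g : 'rV[R]_n -> U) (x : 'rV[R]_n) :=
  \forall y \near x, f y = g y.

From HB Require Import structures.
From mathcomp Require Import all_boot all_order all_algebra.
From mathcomp Require Import all_classical all_reals all_analysis.

(* Fix x and a ball B around x inside W.  On a segment t |-> t u + x in B,
   every parameter t in [0, 1] lies in the coincidence set of h with one of the
   countably many maps g, and at a non-isolated point of that set the derivative
   of h along u is the one of g.  Since each set of reals has countably many
   isolated points, the continuous paths t |-> dh (t u + x) u and
   t |-> h (t u + x) - t dh (t u + x) u take countably many values on [0, 1],
   hence are constant: h agrees on B with its tangent map at x.  The coincidence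
   sets of this affine map with the maps g are closed and cover B, so by Baire
   one of them has interior, and affine maps agreeing on an open set are equal. *)

Set Implicit Arguments.
Unset Strict Implicit.
Unset Printing Implicit Defensive.

Import Order.TTheory GRing.Theory Num.Theory Num.Def.
Import numFieldNormedType.Exports.
Local Open Scope classical_set_scope.
Local Open Scope ring_scope.

(* Matrices carry complete and normed-module structures separately; Baire's
   theorem needs their join. *)
HB.instance Definition _ (R : realType) m k := Complete.on 'M[R]_(m, k).

Lemma countableU T (A B : set T) :
  countable A -> countable B -> countable (A `|` B).
Proof.
by move=> cA cB; rewrite -bigcup2E; apply: bigcup_countable => // -[|[|i]].
Qed.

Section countably_affine.
Context {R : realType}.

Lemma itvoo_not_countable (a b : R) : a < b -> ~ countable `]a, b[%classic.
Proof.
move=> ab /countable_lebesgue_measure0.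
rewrite lebesgue_measure_itv/= lte_fin ab -EFinD => -[] /eqP.
by rewrite subr_eq0 gt_eqF.
Qed.

Lemma continuous_countable_image_eq (phi : R -> R) :
  {in `[0, 1], continuous phi} -> countable (phi @` `[0, 1]) -> phi 0 = phi 1.
Proof.
move=> cphi; apply: contraPP => /eqP ne01.
have lt_mM : minr (phi 0) (phi 1) < maxr (phi 0) (phi 1).
  rewrite minElt maxElt.
  by case: (ltgtP (phi 0) (phi 1)) ne01 => // ->; rewrite eqxx.
move=> cimg; apply: (itvoo_not_countable lt_mM).
apply: sub_countable cimg; apply: subset_card_le => v.
rewrite /= in_itv /= => /andP[mv vM].
have [c c01 <-] : exists2 c, c \in `[0, 1] & phi c = v.
  apply: IVT; first exact: ler01.
    by apply: continuous_in_subspaceT => t; rewrite inE => /cphi.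
  by rewrite (ltW mv) (ltW vM).
by exists c; rewrite // -inE.
Qed.

Lemma continuous_countable_image_mx_eq m k (psi : R -> 'M[R]_(m, k)) :
  {in `[0, 1], continuous psi} -> countable (psi @` `[0, 1]) -> psi 0 = psi 1.
Proof.
move=> cpsi cimg; apply/matrixP => i j.
apply: (continuous_countable_image_eq (phi := fun t => psi t i j)).
  move=> t t01; apply: (@continuous_comp _ _ _ psi (fun M => M i j)).
    exact: cpsi.
  exact: coord_continuous.
rewrite -(image_comp psi (fun M => M i j)).
apply: sub_countable cimg; exact: card_image_le.
Qed.

Lemma derive_at_limit_point_affine (V : normedModType R) (f : R -> V)
    (a b df : V) (t : R) :
  is_derive t 1 f df -> f t = a + t *: b ->
  limit_point [set s | f s = a + s *: b] t -> df = b.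
Proof.
move=> [fder <-] ft tlim; apply/eqP/negPn/negP => neq.
have e0 : 0 < `|'D_1 f t - b| by rewrite normr_gt0 subr_eq0.
have /nbhs_ballP[d /= d0 close] : \forall s \near 0^',
    `|'D_1 f t - s^-1 *: (f (s *: 1 + t) - f t)| < `|'D_1 f t - b|.
  exact: cvgr_dist_lt fder _ e0.
have [y [yt fy dty]] := tlim _ (nbhsx_ballx t d d0).
have yt0 : y - t != 0 by rewrite subr_eq0.
have yt_near : ball 0 d (y - t).
  by move: dty; rewrite -!ball_normE /= sub0r normrN distrC.
have := close (y - t) yt_near yt0.
rewrite [(y - t)%:A]mulr1 subrK fy ft opprD addrACA subrr add0r -scalerBl.
by rewrite scalerA mulVf // scale1r ltxx.
Qed.

Lemma countably_affine_path m k (I : countType) (a b : I -> 'M[R]_(m, k))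
    (f f' : R -> 'M[R]_(m, k)) :
  {in `[0, 1], forall t : R, is_derive t 1 f (f' t)} ->
  {in `[0, 1], continuous f'} ->
  {in `[0, 1], forall t, exists i, f t = a i + t *: b i} ->
  f 1 = f 0 + f' 0.
Proof.
move=> df cf' fab.
pose E i := [set t | f t = a i + t *: b i].
have countable_image (c : I -> 'M[R]_(m, k)) (psi : R -> 'M[R]_(m, k)) :
    {in `[0, 1], forall t i, E i t -> limit_point (E i) t -> psi t = c i} ->
    countable (psi @` `[0, 1]).
  move=> psic; pose Iso := \bigcup_(i in setT) isolated (E i).
  have cU : countable (range c `|` psi @` Iso).
    apply: countableU; apply: sub_countable (card_image_le _ _) _ => //.
    by apply: bigcup_countable => // i _; exact: countable_isolated.
  apply: (sub_countable (subset_card_le _) cU) => _ [t t01 <-].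
  have [i Eit] := fab t t01.
  have : closure (E i) t by exact: subset_closure.
  rewrite closure_isolated_limit_point => -[iso|lim].
    by right; exists t => //; exists i.
  by left; exists i => //; rewrite (psic t t01 i).
have f'01 : f' 0 = f' 1.
  apply: (continuous_countable_image_mx_eq cf'); apply: (countable_image b).
  move=> t t01 i Eit lim.
  exact: derive_at_limit_point_affine (df t t01) Eit lim.
have : f 0 - 0 *: f' 0 = f 1 - 1 *: f' 1.
  apply: (continuous_countable_image_mx_eq (psi := fun t => f t - t *: f' t)).
    move=> t t01; have [fder _] := df t t01.
    apply: cvgB; last exact: cvgZ (cf' t t01).
    exact/differentiable_continuous/derivable1_diffP.
  apply: (countable_image a) => t t01 i Eit lim.
  by rewrite (derive_at_limit_point_affine (df t t01) Eit lim) Eit addrK.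
by rewrite scale0r subr0 scale1r -f'01 => ->; rewrite subrK.
Qed.

Lemma mulmx_continuous n k (A : 'M[R]_(n, k)) :
  continuous (fun y : 'rV[R]_n => y *m A).
Proof.
under eq_fun do rewrite mulmx_sum_row.
apply: continuous_big => [|i _]; first exact: add_continuous.
by move=> y; apply: continuousZr_tmp; exact: coord_continuous.
Qed.

Lemma affine_map_continuous n (a : 'rV[R]_n -> 'rV[R]_n) :
  is_affine_map a -> continuous a.
Proof.
move=> [A [b aE]]; rewrite (funext aE) => y.
apply: cvgD; first exact: nbhs_filter.
  exact: mulmx_continuous.
exact: cst_continuous.
Qed.

Lemma is_derive_along_line (V W : normedModType R) (h : V -> W) (u x : V)
    (t : R) :
  differentiable h (t *: u + x) ->
  is_derive t 1 (fun s => h (s *: u + x)) ('d h (t *: u + x) u).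
Proof.
move=> dh.
have quotientE :
    (fun s : R => s^-1 *: (h ((s *: 1 + t) *: u + x) - h (t *: u + x))) =
    (fun s => s^-1 *: (h (s *: u + (t *: u + x)) - h (t *: u + x))).
  by apply: funext => s; rewrite [s *: 1]mulr1 scalerDl addrA.
apply: DeriveDef; rewrite /derivable /derive /= quotientE -/(derive h _ u).
  exact: diff_derivable.
exact: deriveE.
Qed.

Lemma affine_map_line n (a : 'rV[R]_n -> 'rV[R]_n) t u x :
  is_affine_map a -> a (t *: u + x) = a x + t *: (a (u + x) - a x).
Proof.
move=> [A [b aE]]; rewrite !aE mulmxDl -scalemxAl mulmxDl.
by rewrite -(addrA (u *m A)) addrK [RHS]addrC addrA.
Qed.

Lemma open_neq_continuous (V W : normedModType R) (f g : V -> W) :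
  continuous f -> continuous g -> open [set y | f y != g y].
Proof.
move=> cf cg; rewrite openE => y /= fgy.
have e0 : 0 < `|f y - g y| by rewrite normr_gt0 subr_eq0.
have : \forall z \near y, `|(f y - g y) - (f z - g z)| < `|f y - g y|.
  exact: cvgr_dist_lt (cvgB (cf y) (cg y)) _ e0.
apply: filterS => z; apply: contraTN => /eqP fgz.
by rewrite fgz subrr subr0 ltxx.
Qed.

Section affine_maps.
Variable n : nat.
Local Notation V := 'rV[R]_n.

Lemma is_affine_map_linear (f : {linear V -> V}) (c x : V) :
  is_affine_map (fun y => c + f (y - x)).
Proof.
by exists (lin1_mx f), (c - f x) => y; rewrite mul_rV_lin1 linearB addrCA addrC.
Qed.

Lemma dense_affine_neq (a b : V -> V) :
  is_affine_map a -> is_affine_map b -> (exists y, a y != b y) ->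
  dense [set y | a y != b y].
Proof.
move=> affa affb [y aby] O [p Op] oO.
have [abp|abp] := eqVneq (a p) (b p); last by exists p.
have line_cont : {for 0, continuous (fun e : R => e *: (y - p) + p)}.
  by apply: continuousD; [exact: continuousZr_tmp | exact: cst_continuous].
have /nbhs_ballP[d d0 dO] :
    nbhs (0 : R) ((fun e : R => e *: (y - p) + p) @^-1` O).
  by apply: line_cont; rewrite scale0r add0r; exact: open_nbhs_nbhs.
have d20 : 0 < d / 2 by rewrite divr_gt0.
exists (d / 2 *: (y - p) + p); split.
  apply: dO; rewrite -ball_normE /= sub0r normrN ger0_norm ?ltW //.
  by rewrite ltr_pdivrMr // ltr_pMr // ltr1n.
rewrite /= !affine_map_line // subrK abp.
rewrite (inj_eq (addrI _)) (inj_eq (scalerI _)) ?(inj_eq (addIr _)) //.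
by rewrite gt_eqF.
Qed.

Lemma affine_cover_open (I : countType) (k : V -> V) (a : I -> V -> V)
    (U : set V) :
  is_affine_map k -> (forall i, is_affine_map (a i)) -> open U -> U !=set0 ->
  (forall y, U y -> exists i, k y = a i y) -> exists i, k = a i.
Proof.
move=> affk affa oU U0 cover; apply: contrapT => nok.
have kneq i : exists y, k y != a i y.
  apply: contrapT => /forallNP kai; apply: nok; exists i; apply: funext => y.
  by apply/eqP/negPn/negP; exact: kai.
pose F m := if unpickle m is Some i then [set y | k y != a i y] else setT.
have F_open_dense m : open (F m) /\ dense (F m).
  rewrite /F; case: unpickle => [i|]; last first.
    by split; [exact: openT | move=> O [p Op] _; exists p].
  split; last exact: dense_affine_neq.
  by apply: open_neq_continuous; exact: affine_map_continuous.
have [y [Uy Fy]] := Baire F_open_dense U0 oU.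
have [i kiy] := cover y Uy.
by have := Fy (pickle i) Logic.I; rewrite /F pickleK /= kiy eqxx.
Qed.

Lemma C1_pointwise_affine_segment (I : countType) (a : I -> V -> V) (h : V -> V)
    (u x : V) :
  (forall i, is_affine_map (a i)) ->
  {in `[0, 1], forall t : R, differentiable h (t *: u + x)} ->
  {in `[0, 1], forall t : R,
    {for t *: u + x, continuous (fun y => 'd h y u)}} ->
  {in `[0, 1], forall t : R, exists i, h (t *: u + x) = a i (t *: u + x)} ->
  h (u + x) = h x + 'd h x u.
Proof.
move=> affa dh cdh orb.
have := countably_affine_path (a := fun i => a i x)
  (b := fun i => a i (u + x) - a i x) (f := fun t => h (t *: u + x))
  (f' := fun t => 'd h (t *: u + x) u).
rewrite scale1r scale0r add0r; apply.
- by move=> t t01; exact: is_derive_along_line (dh t t01).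
- move=> t t01.
  apply: (@continuous_comp _ _ _ (fun s : R => s *: u + x) (fun y => 'd h y u)).
    by apply: continuousD; [exact: continuousZr_tmp | exact: cst_continuous].
  exact: cdh.
- move=> t t01; have [i hi] := orb t t01.
  by exists i; rewrite hi affine_map_line.
Qed.

Lemma C1_pointwise_affine_ball (I : countType) (a : I -> V -> V) (W : set V)
    (h : V -> V) (x : V) (r : R) :
  (forall i, is_affine_map (a i)) -> C1_on W h ->
  (forall y, W y -> exists i, h y = a i y) -> ball x r `<=` W ->
  forall y, ball x r y -> h y = h x + 'd h x (y - x).
Proof.
move=> affa [dh cdh] orb brW y bxy.
have W_segment t : t \in `[0, 1] -> W (t *: (y - x) + x).
  rewrite in_itv /= => /andP[t0 t1]; apply: brW; move: bxy.
  rewrite -!ball_normE /= opprD addrCA subrr addr0 normrN normrZ ger0_norm //.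
  by rewrite distrC; apply: le_lt_trans; exact: ler_piMl.
have := C1_pointwise_affine_segment affa (h := h) (u := y - x) (x := x).
rewrite subrK; apply => t t01.
- exact: dh (W_segment t t01).
- exact: cdh (W_segment t t01).
- exact: orb (W_segment t t01).
Qed.
End affine_maps.
End countably_affine.

Theorem corollary1 (R : realType) (n : nat) (G : countType)
  (mul : G -> G -> G) (one : G) (inv : G -> G)
  (act : G -> 'rV[R]_n -> 'rV[R]_n)
  (W : set 'rV[R]_n) (h : 'rV[R]_n -> 'rV[R]_n) :
  is_group mul one inv ->
  affine_action mul one act ->
  open W ->
  C1_on W h ->
  (forall x, W x -> exists g : G, h x = act g x) ->
  forall x, W x -> exists g : G, same_germ h (act g) x.
Proof.
move=> _ [_ _ aff] oW hC1 orb x Wx.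
have /nbhs_ballP[r r0 brW] : nbhs x W by exact: open_nbhs_nbhs.
have h_tangent := C1_pointwise_affine_ball aff hC1 orb brW.
have [g tangent_g] : exists g, (fun y => h x + 'd h x (y - x)) = act g.
  apply: affine_cover_open (is_affine_map_linear _ _ _) aff (ball_open x r) _ _.
    by exists x; exact: ballxx.
  by move=> y bxy; rewrite -h_tangent //; exact: orb (brW y bxy).
exists g; apply/nbhs_ballP; exists r => // y bxy.
by rewrite h_tangent // -tangent_g.
Qed.
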